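(* Consider a solution as in the setting, defined for $R\in(R_0,\infty)$ (the full areal-coordinate covering of the maximal Cauchy development), and let $R_i\in(R_0,\infty)$. (1) If $\mathcal{E}(R_i)=0$ then $\mathcal{E}(R)=0$ for all $R\in(R_0,\infty)$. (2) If $\mathcal{E}(R_i)\neq 0$ then $\mathcal{E}(R)$ is nonincreasing in $R$ on $(R_0,\infty)$. (3) If $\mathcal{E}(R_i)\neq0$ and $K\neq0$ then $\mathcal{E}(R)$ is strictly decreasing in $R$ on $(R_0,\infty)$.
   Context: Setting. A smooth vacuum $T^2$ symmetric spacetime on $T^3\times I$ in areal coordinates $(\theta,x,y,R)$, $\theta\in S^1=\mathbb{R}/\mathbb{Z}$, with metric $g=e^{2(\nu-U)}(-\alpha\,dR^2+d\theta^2)+e^{2U}[dx+A\,dy+(G+AH)\,d\theta]^2+e^{-2U}R^2(dy+H\,d\theta)^2$, where $\alpha>0,\nu,U,A,G,H$ are smooth functions of $(\theta,R)$ only, periodic in $\theta$. The Killing fields $\partial_x,\partial_y$ are chosen so that the twist $\epsilon_{abcd}X^aY^b\nabla^cX^d$ vanishes ($X=\partial_x,Y=\partial_y$), and $K\ge0$ denotes the constant twist $\epsilon_{abcd}Y^aX^b\nabla^cY^d$. Set $\beta=\nu+\tfrac12\ln\alpha$. The vacuum equations are: $\beta_R=\sqrt{\alpha}Rh-\frac{e^{2\beta}K^2}{4R^3}$, $\beta_\theta=2R\big(U_RU_\theta+\frac{e^{4U}}{4R^2}A_RA_\theta\big)$, $\alpha_R=-\frac{\alpha e^{2\beta}K^2}{R^3}$,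 $U_{RR}-\alpha U_{\theta\theta}=-\frac{U_R}{R}+\frac{\alpha_RU_R}{2\alpha}+\frac{\alpha_\theta U_\theta}{2}+\frac{e^{4U}}{2R^2}(A_R^2-\alpha A_\theta^2)$, $A_{RR}-\alpha A_{\theta\theta}=\frac{A_R}{R}+\frac{\alpha_RA_R}{2\alpha}+\frac{\alpha_\theta A_\theta}{2}-4A_RU_R+4\alpha A_\theta U_\theta$, $G_R=-AH_R$, $H_R=\frac{e^{2\beta}K}{\sqrt{\alpha}R^3}$, with $h=\frac{U_R^2}{\sqrt\alpha}+\sqrt\alpha\,U_\theta^2+\frac{e^{4U}}{4R^2}\Big(\frac{A_R^2}{\sqrt\alpha}+\sqrt\alpha\,A_\theta^2\Big)$ and $\mathcal{E}(R)=\int_{S^1}h\,d\theta$. Solutions are uniquely determined by data at one time $R_i$. The maximal Cauchy development of such data is covered by these coordinates with $R\in(R_0,\infty)$ for some $R_0\ge0$. *)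

From Stdlib Require Import Reals List.
From Coquelicot Require Import Coquelicot.
Open Scope R_scope.

(* Functions of (theta, R): first argument theta, second argument R. *)

Definition pth (f : R -> R -> R) : R -> R -> R :=
  fun th r => Derive (fun t => f t r) th.
Definition pR (f : R -> R -> R) : R -> R -> R :=
  fun th r => Derive (fun s => f th s) r.

Fixpoint pd (l : list bool) (f : R -> R -> R) : R -> R -> R :=
  match l with
  | nil => f
  | b :: l' => if b then pth (pd l' f) else pR (pd l' f)
  end.

Definition smooth_on (R0 : R) (f : R -> R -> R) : Prop :=
  forall (l : list bool) (th r : R), R0 < r ->
    ex_derive (fun t => pd l f t r) th /\
    ex_derive (fun s => pd l f th s) r /\
    continuous (fun p : R * R => pd l f (fst p) (snd p)) (th, r).

(* periodic in theta with period 1 (theta in R/Z) *)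
Definition periodic1 (f : R -> R -> R) : Prop :=
  forall th r, f (th + 1) r = f th r.

Definition beta (nu alpha : R -> R -> R) : R -> R -> R :=
  fun th r => nu th r + / 2 * ln (alpha th r).

Definition hdens (alpha U A : R -> R -> R) (th r : R) : R :=
  (pR U th r) ^ 2 / sqrt (alpha th r) + sqrt (alpha th r) * (pth U th r) ^ 2
  + exp (4 * U th r) / (4 * r ^ 2) *
    ((pR A th r) ^ 2 / sqrt (alpha th r) + sqrt (alpha th r) * (pth A th r) ^ 2).

Definition energy (alpha U A : R -> R -> R) (r : R) : R :=
  RInt (fun th => hdens alpha U A th r) 0 1.

(* smooth vacuum T^2-symmetric solution in areal coordinates on
   S^1 x (R0, oo), with constant twist K *)
Definition T2_vacuum (R0 K : R) (alpha nu U A G H : R -> R -> R) : Prop :=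
  let b := beta nu alpha in
  (forall f, In f (alpha :: nu :: U :: A :: G :: H :: nil) ->
     smooth_on R0 f /\ periodic1 f) /\
  (forall th r, R0 < r -> 0 < alpha th r) /\
  (forall th r, R0 < r ->
     pR b th r = sqrt (alpha th r) * r * hdens alpha U A th r
                 - exp (2 * b th r) * K ^ 2 / (4 * r ^ 3)) /\
  (forall th r, R0 < r ->
     pth b th r = 2 * r * (pR U th r * pth U th r
                 + exp (4 * U th r) / (4 * r ^ 2) * pR A th r * pth A th r)) /\
  (forall th r, R0 < r ->
     pR alpha th r = - (alpha th r * exp (2 * b th r) * K ^ 2 / r ^ 3)) /\
  (forall th r, R0 < r ->
     pR (pR U) th r - alpha th r * pth (pth U) th r =
       - (pR U th r / r) + pR alpha th r * pR U th r / (2 * alpha th r)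
       + pth alpha th r * pth U th r / 2
       + exp (4 * U th r) / (2 * r ^ 2) *
           ((pR A th r) ^ 2 - alpha th r * (pth A th r) ^ 2)) /\
  (forall th r, R0 < r ->
     pR (pR A) th r - alpha th r * pth (pth A) th r =
       pR A th r / r + pR alpha th r * pR A th r / (2 * alpha th r)
       + pth alpha th r * pth A th r / 2
       - 4 * pR A th r * pR U th r
       + 4 * alpha th r * pth A th r * pth U th r) /\
  (forall th r, R0 < r -> pR G th r = - (A th r * pR H th r)) /\
  (forall th r, R0 < r ->
     pR H th r = exp (2 * b th r) * K / (sqrt (alpha th r) * r ^ 3)).

From Stdlib Require Import Reals Lra List.
From Coquelicot Require Import Coquelicot.
Open Scope R_scope.

(* Differentiating h in R and eliminating U_RR, A_RR and alpha_R with the field equations gives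
   d_R h = d_theta F + S, with the periodic flux
     F = 2 sqrt(alpha) (U_R U_theta + e^{4U}/(4R^2) A_R A_theta)
   and the source
     S = -(2/R) (U_R^2/sqrt(alpha) + e^{4U}/(4R^2) sqrt(alpha) A_theta^2) - e^{2 beta} K^2/(2R^3) h,
   so E' = int S and -(2/R + K^2 e^{2 beta}/(2R^3)) h <= S <= -K^2 e^{2 beta}/(2R^3) h <= 0.
   By AM-GM |beta_theta| <= R h, so beta oscillates on the circle by at most R E(R), which bounds
   e^{2 beta} in terms of beta(0,R) and E(R). Hence E is nonincreasing, strictly where E > 0 and
   K <> 0, and E' >= -C E on compact intervals: a zero of E propagates forward by monotonicity and
   backward by Gronwall's inequality. *)

Lemma exp_le x y : x <= y -> exp x <= exp y.
Proof. intros [Hlt | ->]; [left; now apply exp_increasing | lra]. Qed.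

Lemma Rdiv_le_compat_pos a b c d : 0 <= a <= b -> 0 < c <= d -> a / d <= b / c.
Proof.
  intros Hab Hcd. unfold Rdiv. apply Rmult_le_compat; try lra.
  - left. apply Rinv_0_lt_compat. lra.
  - apply Rinv_le_contravar; lra.
Qed.

Lemma continuity_2d_pt_fst (f : R -> R -> R) x y :
  continuity_2d_pt f x y -> continuous (fun t => f t y) x.
Proof.
  intros Hf. apply filterlim_locally. intros eps.
  destruct (Hf eps) as [d Hd]. exists d. intros t Ht.
  apply Hd; [exact Ht|]. rewrite Rminus_diag, Rabs_R0. apply cond_pos.
Qed.

Lemma continuity_2d_pt_snd (f : R -> R -> R) x y :
  continuity_2d_pt f x y -> continuous (fun t => f x t) y.
Proof.
  intros Hf. apply filterlim_locally. intros eps.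
  destruct (Hf eps) as [d Hd]. exists d. intros t Ht.
  apply Hd; [|exact Ht]. rewrite Rminus_diag, Rabs_R0. apply cond_pos.
Qed.

Lemma continuity_2d_pt_swap (f : R -> R -> R) x y :
  continuity_2d_pt f x y -> continuity_2d_pt (fun u v => f v u) y x.
Proof.
  intros Hf eps. destruct (Hf eps) as [d Hd]. exists d. intros u v Hu Hv. now apply Hd.
Qed.

Lemma continuity_2d_pt_pow (f : R -> R -> R) n x y :
  continuity_2d_pt f x y -> continuity_2d_pt (fun u v => f u v ^ n) x y.
Proof.
  apply (continuity_1d_2d_pt_comp (fun z => z ^ n)).
  apply derivable_continuous_pt, derivable_pt_pow.
Qed.

Lemma continuity_2d_pt_exp (f : R -> R -> R) x y :
  continuity_2d_pt f x y -> continuity_2d_pt (fun u v => exp (f u v)) x y.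
Proof.
  apply (continuity_1d_2d_pt_comp exp).
  apply derivable_continuous_pt, derivable_pt_exp.
Qed.

Lemma continuity_2d_pt_sqrt (f : R -> R -> R) x y :
  0 < f x y -> continuity_2d_pt f x y -> continuity_2d_pt (fun u v => sqrt (f u v)) x y.
Proof.
  intros Hpos. apply (continuity_1d_2d_pt_comp sqrt).
  apply continuity_pt_sqrt. lra.
Qed.

Lemma continuity_2d_pt_ln (f : R -> R -> R) x y :
  0 < f x y -> continuity_2d_pt f x y -> continuity_2d_pt (fun u v => ln (f u v)) x y.
Proof.
  intros Hpos. apply (continuity_1d_2d_pt_comp ln).
  apply derivable_continuous_pt. exists (/ f x y). now apply derivable_pt_lim_ln.
Qed.

Lemma ex_RInt_continuity_2d_pt (f : R -> R -> R) a b r :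
  (forall t, Rmin a b <= t <= Rmax a b -> continuity_2d_pt f t r) ->
  ex_RInt (fun t => f t r) a b.
Proof.
  intros Hf. apply (ex_RInt_continuous (V := R_CompleteNormedModule)).
  intros t Ht. now apply continuity_2d_pt_fst, Hf.
Qed.

Lemma RInt_scal_R (f : R -> R) a b k :
  ex_RInt f a b -> RInt (fun x => k * f x) a b = k * RInt f a b.
Proof. exact (RInt_scal (V := R_CompleteNormedModule) f a b k). Qed.

Lemma RInt_le_scal (f g : R -> R) a b k :
  a <= b -> ex_RInt f a b -> ex_RInt g a b -> (forall x, a < x < b -> k * f x <= g x) ->
  k * RInt f a b <= RInt g a b.
Proof.
  intros Hab Hf Hg Hle. rewrite <- RInt_scal_R by exact Hf.
  apply RInt_le; auto. now apply (ex_RInt_scal (V := R_CompleteNormedModule)).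
Qed.

Lemma RInt_le_scal_r (f g : R -> R) a b k :
  a <= b -> ex_RInt f a b -> ex_RInt g a b -> (forall x, a < x < b -> g x <= k * f x) ->
  RInt g a b <= k * RInt f a b.
Proof.
  intros Hab Hf Hg Hle. rewrite <- RInt_scal_R by exact Hf.
  apply RInt_le; auto. now apply (ex_RInt_scal (V := R_CompleteNormedModule)).
Qed.

Lemma abs_cross_le (s c a1 b1 a2 b2 : R) : 0 < s -> 0 <= c ->
  2 * Rabs (a1 * b1 + c * a2 * b2) <= a1 ^ 2 / s + s * b1 ^ 2 + c * (a2 ^ 2 / s + s * b2 ^ 2).
Proof.
  intros Hs Hc.
  replace (a1 ^ 2 / s) with (s * (a1 / s) ^ 2) by (field; lra).
  replace (a2 ^ 2 / s) with (s * (a2 / s) ^ 2) by (field; lra).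
  replace (a1 * b1 + c * a2 * b2) with (s * (a1 / s * b1 + c * (a2 / s) * b2)) by (field; lra).
  set (p := a1 / s). set (q := a2 / s).
  rewrite Rabs_mult, (Rabs_pos_eq s) by lra.
  assert (2 * Rabs (p * b1 + c * q * b2) <= p ^ 2 + b1 ^ 2 + c * (q ^ 2 + b2 ^ 2)).
  { pose proof (Rmult_le_pos c _ Hc (pow2_ge_0 (q - b2))).
    pose proof (Rmult_le_pos c _ Hc (pow2_ge_0 (q + b2))).
    pose proof (pow2_ge_0 (p - b1)). pose proof (pow2_ge_0 (p + b1)).
    unfold Rabs. destruct Rcase_abs; nra. }
  nra.
Qed.

Lemma locally_halfline R0 r (P : R -> Prop) : R0 < r -> (forall s, R0 < s -> P s) -> locally r P.
Proof.
  intros Hr HP. assert (Hd : 0 < r - R0) by lra. exists (mkposreal _ Hd).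
  intros s Hs. apply HP. change (Rabs (s - r) < r - R0) in Hs. apply Rabs_def2 in Hs. lra.
Qed.

Lemma locally_2d_halfline R0 th r (P : R -> R -> Prop) : R0 < r ->
  (forall u v, R0 < v -> P u v) -> locally_2d P th r.
Proof.
  intros Hr HP. assert (Hd : 0 < r - R0) by lra. exists (mkposreal _ Hd).
  intros u v _ Hv. apply HP. simpl in Hv. apply Rabs_def2 in Hv. lra.
Qed.

Lemma is_derive_RInt_param_halfline (f df : R -> R -> R) a b R0 r : R0 < r ->
  (forall t s, R0 < s -> is_derive (fun u => f t u) s (df t s)) ->
  (forall t s, R0 < s -> continuity_2d_pt f t s) ->
  (forall t s, R0 < s -> continuity_2d_pt df t s) ->
  is_derive (fun s => RInt (fun t => f t s) a b) r (RInt (fun t => df t r) a b).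
Proof.
  intros Hr Hd Hf Hdf.
  rewrite (RInt_ext _ (fun t => Derive (fun u => f t u) r)).
  2: { intros t _. symmetry. apply is_derive_unique, Hd, Hr. }
  apply (is_derive_RInt_param (fun u t => f t u)).
  - apply (locally_halfline R0); [exact Hr|]. intros s Hs t _. eexists. now apply Hd.
  - intros t _. apply continuity_2d_pt_swap.
    apply (continuity_2d_pt_ext_loc df); [|now apply Hdf].
    apply (locally_2d_halfline R0); [exact Hr|].
    intros u v Hv. symmetry. now apply is_derive_unique, Hd.
  - apply (locally_halfline R0); [exact Hr|]. intros s Hs.
    apply ex_RInt_continuity_2d_pt. intros t _. now apply Hf.
Qed.

Lemma is_derive_abs_sub_le_RInt (f df g : R -> R) a b : a <= b ->
  (forall x, a <= x <= b -> is_derive f x (df x)) ->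
  (forall x, a <= x <= b -> continuous df x) ->
  ex_RInt g a b -> (forall x, a <= x <= b -> Rabs (df x) <= g x) ->
  Rabs (f b - f a) <= RInt g a b.
Proof.
  intros Hab Hd Hc Hg Hle.
  assert (HI : is_RInt df a b (f b - f a)).
  { apply (is_RInt_derive f df); rewrite Rmin_left, Rmax_right by lra; auto. }
  rewrite <- (is_RInt_unique _ _ _ _ HI).
  eapply Rle_trans; [apply abs_RInt_le; [exact Hab | eexists; exact HI]|].
  apply RInt_le; auto.
  - apply (ex_RInt_norm df). eexists; exact HI.
  - intros x Hx. apply Hle. lra.
Qed.

Lemma RInt_nonneg_le_extend (h : R -> R) a b c : a <= b <= c ->
  ex_RInt h a b -> ex_RInt h b c -> (forall x, b <= x <= c -> 0 <= h x) ->
  RInt h a b <= RInt h a c.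
Proof.
  intros Habc Hab Hbc Hpos.
  rewrite <- (RInt_Chasles (V := R_CompleteNormedModule) h a b c Hab Hbc).
  assert (0 <= RInt h b c).
  { apply RInt_ge_0; [lra | exact Hbc |]. intros x Hx. apply Hpos. lra. }
  change (plus ?x ?y) with (x + y). lra.
Qed.

Lemma is_derive_nonneg_le (f df : R -> R) a b : a <= b ->
  (forall x, a <= x <= b -> is_derive f x (df x)) ->
  (forall x, a <= x <= b -> 0 <= df x) -> f a <= f b.
Proof.
  intros Hab Hd Hpos. destruct (Req_dec a b) as [<-|Hne]; [lra|].
  destruct (MVT_cor3 f df a b) as [c [Hac [Hcb ->]]]; [lra| |].
  - intros x Hax Hxb. apply is_derive_Reals, Hd. lra.
  - assert (0 <= df c) by (apply Hpos; lra). nra.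
Qed.

Lemma is_derive_neg_lt (f df : R -> R) a b : a < b ->
  (forall x, a <= x <= b -> is_derive f x (df x)) ->
  (forall x, a <= x <= b -> df x < 0) -> f b < f a.
Proof.
  intros Hab Hd Hneg.
  destruct (MVT_cor3 f df a b) as [c [Hac [Hcb ->]]]; [lra| |].
  - intros x Hax Hxb. apply is_derive_Reals, Hd. lra.
  - assert (df c < 0) by (apply Hneg; lra). nra.
Qed.

(* Backward Gronwall: [x |-> f x * exp (C * x)] is nondecreasing. *)
Lemma is_derive_gronwall (f df : R -> R) C a b : a <= b ->
  (forall x, a <= x <= b -> is_derive f x (df x)) ->
  (forall x, a <= x <= b -> - C * f x <= df x) ->
  f a <= f b * exp (C * (b - a)).
Proof.
  intros Hab Hd Hlow.
  assert (Hmon : f a * exp (C * a) <= f b * exp (C * b)).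
  { apply (is_derive_nonneg_le (fun x => f x * exp (C * x))
             (fun x => df x * exp (C * x) + f x * (C * exp (C * x)))); auto.
    - intros x Hx. auto_derive; [now exists (df x); apply Hd|].
      replace (Derive (fun y => f y) x) with (df x) by (symmetry; now apply is_derive_unique, Hd).
      ring.
    - intros x Hx. specialize (Hlow x Hx). pose proof (exp_pos (C * x)). nra. }
  assert (Hsplit : exp (C * b) = exp (C * (b - a)) * exp (C * a))
    by (rewrite <- exp_plus; f_equal; ring).
  apply (Rmult_le_reg_r (exp (C * a))); [apply exp_pos|].
  now rewrite Rmult_assoc, <- Hsplit.
Qed.

Lemma pd_app (l m : list bool) (f : R -> R -> R) : pd l (pd m f) = pd (l ++ m) f.
Proof. induction l as [|b l IH]; simpl; [reflexivity|]. now rewrite IH. Qed.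

Section Smooth.
Variables (R0 : R) (f : R -> R -> R).
Hypothesis f_smooth : smooth_on R0 f.

Lemma smooth_on_pd (m : list bool) : smooth_on R0 (pd m f).
Proof. intros l. rewrite pd_app. apply f_smooth. Qed.

Lemma smooth_on_pR : smooth_on R0 (pR f).
Proof. exact (smooth_on_pd (false :: nil)). Qed.

Lemma smooth_on_pth : smooth_on R0 (pth f).
Proof. exact (smooth_on_pd (true :: nil)). Qed.

Lemma smooth_on_continuity_2d th r : R0 < r -> continuity_2d_pt f th r.
Proof. intros Hr. apply continuity_2d_pt_filterlim, (f_smooth nil th r Hr). Qed.

Lemma smooth_on_ex_derive_R th r : R0 < r -> ex_derive (fun s => f th s) r.
Proof. intros Hr. apply (f_smooth nil th r Hr). Qed.

Lemma smooth_on_ex_derive_theta th r : R0 < r -> ex_derive (fun t => f t r) th.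
Proof. intros Hr. apply (f_smooth nil th r Hr). Qed.

Lemma smooth_on_pth_pR th r : R0 < r -> pth (pR f) th r = pR (pth f) th r.
Proof.
  intros Hr. apply (Schwarz f th r).
  - apply (locally_2d_halfline R0); [exact Hr|]. intros u v Hv.
    split; [|split; [|split]].
    + exact (proj1 (f_smooth nil u v Hv)).
    + exact (proj1 (proj2 (f_smooth nil u v Hv))).
    + exact (proj1 (f_smooth (false :: nil) u v Hv)).
    + exact (proj1 (proj2 (f_smooth (true :: nil) u v Hv))).
  - apply continuity_2d_pt_filterlim, (f_smooth (true :: false :: nil) th r Hr).
  - apply continuity_2d_pt_filterlim, (f_smooth (false :: true :: nil) th r Hr).
Qed.

End Smooth.

Lemma periodic1_pR f : periodic1 f -> periodic1 (pR f).
Proof. intros Hf th r. unfold pR. apply Derive_ext. intros s. apply Hf. Qed.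

Lemma periodic1_pth f : periodic1 f -> periodic1 (pth f).
Proof.
  intros Hf th r. unfold pth, Derive. f_equal. apply Lim_ext. intros h.
  replace (th + 1 + h) with (th + h + 1) by ring. now rewrite !Hf.
Qed.

Definition flux (alpha U A : R -> R -> R) (th r : R) : R :=
  2 * sqrt (alpha th r) * (pR U th r * pth U th r
     + exp (4 * U th r) / (4 * r ^ 2) * pR A th r * pth A th r).

Definition flux_dth (alpha U A : R -> R -> R) (th r : R) : R :=
  let sa := sqrt (alpha th r) in let e := exp (4 * U th r) / (4 * r ^ 2) in
  pth alpha th r / sa * (pR U th r * pth U th r + e * pR A th r * pth A th r)
  + 2 * sa * (pth (pR U) th r * pth U th r + pR U th r * pth (pth U) th r
     + e * (4 * pth U th r * pR A th r * pth A th r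
            + pth (pR A) th r * pth A th r + pR A th r * pth (pth A) th r)).

Definition hdens_source (K : R) (alpha nu U A : R -> R -> R) (th r : R) : R :=
  - (2 / r) * (pR U th r ^ 2 / sqrt (alpha th r)
               + exp (4 * U th r) / (4 * r ^ 2) * sqrt (alpha th r) * pth A th r ^ 2)
  - exp (2 * beta nu alpha th r) * K ^ 2 / (2 * r ^ 3) * hdens alpha U A th r.

Section Vacuum.
Variables (R0 K : R) (alpha nu U A G H : R -> R -> R).
Hypothesis R0_ge0 : 0 <= R0.
Hypothesis vacuum : T2_vacuum R0 K alpha nu U A G H.

Lemma vacuum_smooth_periodic f :
  In f (alpha :: nu :: U :: A :: G :: H :: nil) -> smooth_on R0 f /\ periodic1 f.
Proof. apply vacuum. Qed.

Ltac smooth := lazymatch goal with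
  | |- smooth_on _ (pR _) => apply smooth_on_pR; smooth
  | |- smooth_on _ (pth _) => apply smooth_on_pth; smooth
  | |- smooth_on _ _ => apply vacuum_smooth_periodic; simpl; tauto
  end.

Lemma alpha_pos th r : R0 < r -> 0 < alpha th r.
Proof. apply vacuum. Qed.

Ltac positivity :=
  repeat first [ apply Rgt_not_eq | apply Rmult_lt_0_compat | apply pow_lt
               | apply Rinv_0_lt_compat | apply sqrt_lt_R0 | apply exp_pos
               | apply alpha_pos | lra ].

Ltac continuity_2d :=
  repeat first
    [ apply continuity_2d_pt_const | apply continuity_2d_pt_id2
    | solve [apply (smooth_on_continuity_2d R0); [smooth | lra]]
    | apply continuity_2d_pt_plus | apply continuity_2d_pt_minus
    | apply continuity_2d_pt_mult | apply continuity_2d_pt_opp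
    | apply continuity_2d_pt_inv | apply continuity_2d_pt_pow | apply continuity_2d_pt_exp
    | apply continuity_2d_pt_sqrt | apply continuity_2d_pt_ln
    | solve [positivity] ].

Lemma alpha_dR th r : R0 < r ->
  pR alpha th r = - (alpha th r * exp (2 * beta nu alpha th r) * K ^ 2 / r ^ 3).
Proof. apply vacuum. Qed.

Lemma beta_dth th r : R0 < r ->
  pth (beta nu alpha) th r = 2 * r * (pR U th r * pth U th r
    + exp (4 * U th r) / (4 * r ^ 2) * pR A th r * pth A th r).
Proof. apply vacuum. Qed.

Lemma U_wave th r : R0 < r ->
  pR (pR U) th r = alpha th r * pth (pth U) th r
    - (pR U th r / r) + pR alpha th r * pR U th r / (2 * alpha th r)
    + pth alpha th r * pth U th r / 2
    + exp (4 * U th r) / (2 * r ^ 2) * ((pR A th r) ^ 2 - alpha th r * (pth A th r) ^ 2).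
Proof.
  intros Hr. pose proof (proj1 (proj2 (proj2 (proj2 (proj2 (proj2 vacuum))))) th r Hr). lra.
Qed.

Lemma A_wave th r : R0 < r ->
  pR (pR A) th r = alpha th r * pth (pth A) th r
    + pR A th r / r + pR alpha th r * pR A th r / (2 * alpha th r)
    + pth alpha th r * pth A th r / 2
    - 4 * pR A th r * pR U th r + 4 * alpha th r * pth A th r * pth U th r.
Proof.
  intros Hr. pose proof (proj1 (proj2 (proj2 (proj2 (proj2 (proj2 (proj2 vacuum)))))) th r Hr). lra.
Qed.

Lemma hdens_is_derive_R th r : R0 < r ->
  is_derive (fun s => hdens alpha U A th s) r
    (flux_dth alpha U A th r + hdens_source K alpha nu U A th r).
Proof.
  intros Hr.
  assert (Hr0 : 0 < r) by lra.
  assert (Ha := alpha_pos th r Hr).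
  assert (Hsa : 0 < sqrt (alpha th r)) by (apply sqrt_lt_R0; lra).
  unfold hdens. auto_derive.
  - repeat split; first [nra | apply (smooth_on_ex_derive_R R0); [smooth | exact Hr]].
  - change (Derive (fun s => ?f th s) r) with (pR f th r).
    rewrite U_wave, A_wave, alpha_dR by exact Hr.
    rewrite <- !(smooth_on_pth_pR R0) by (first [exact Hr | smooth]).
    unfold flux_dth, hdens_source, hdens.
    assert (Hsq : alpha th r = sqrt (alpha th r) * sqrt (alpha th r))
      by (symmetry; apply sqrt_sqrt; lra).
    set (sa := sqrt (alpha th r)) in *. rewrite Hsq. field. lra.
Qed.

Lemma flux_is_derive_theta th r : R0 < r ->
  is_derive (fun t => flux alpha U A t r) th (flux_dth alpha U A th r).
Proof.
  intros Hr.
  assert (Hr0 : 0 < r) by lra.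
  assert (Ha := alpha_pos th r Hr).
  assert (Hsa : 0 < sqrt (alpha th r)) by (apply sqrt_lt_R0; lra).
  unfold flux. auto_derive.
  - repeat split; first [nra | apply (smooth_on_ex_derive_theta R0); [smooth | exact Hr]].
  - change (Derive (fun t => ?f t r) th) with (pth f th r).
    unfold flux_dth. field. lra.
Qed.

Lemma continuity_2d_hdens th r : R0 < r -> continuity_2d_pt (hdens alpha U A) th r.
Proof. intros Hr. unfold hdens, Rdiv. continuity_2d. Qed.

Lemma continuity_2d_flux_dth th r : R0 < r -> continuity_2d_pt (flux_dth alpha U A) th r.
Proof. intros Hr. unfold flux_dth, Rdiv. continuity_2d. Qed.

Lemma continuity_2d_hdens_source th r : R0 < r ->
  continuity_2d_pt (hdens_source K alpha nu U A) th r.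
Proof. intros Hr. unfold hdens_source, hdens, beta, Rdiv. continuity_2d. Qed.

Lemma ex_RInt_hdens r a b : R0 < r -> ex_RInt (fun th => hdens alpha U A th r) a b.
Proof. intros Hr. apply ex_RInt_continuity_2d_pt. intros th _. now apply continuity_2d_hdens. Qed.

Lemma ex_RInt_hdens_source r a b : R0 < r ->
  ex_RInt (fun th => hdens_source K alpha nu U A th r) a b.
Proof.
  intros Hr. apply ex_RInt_continuity_2d_pt. intros th _. now apply continuity_2d_hdens_source.
Qed.

Lemma flux_periodic : periodic1 (flux alpha U A).
Proof.
  assert (Ha : periodic1 alpha) by (apply vacuum_smooth_periodic; simpl; tauto).
  assert (HU : periodic1 U) by (apply vacuum_smooth_periodic; simpl; tauto).
  assert (HA : periodic1 A) by (apply vacuum_smooth_periodic; simpl; tauto).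
  intros th r. unfold flux.
  now rewrite Ha, HU, (periodic1_pR U HU), (periodic1_pth U HU),
    (periodic1_pR A HA), (periodic1_pth A HA).
Qed.

Lemma RInt_flux_dth r : R0 < r -> RInt (fun th => flux_dth alpha U A th r) 0 1 = 0.
Proof.
  intros Hr.
  rewrite (is_RInt_unique _ _ _ (minus (flux alpha U A 1 r) (flux alpha U A 0 r))).
  - replace 1 with (0 + 1) at 1 by ring. rewrite flux_periodic. exact (Rminus_diag _).
  - apply (is_RInt_derive (fun t => flux alpha U A t r)); intros th _.
    + now apply flux_is_derive_theta.
    + now apply continuity_2d_pt_fst, continuity_2d_flux_dth.
Qed.

Lemma energy_is_derive r : R0 < r ->
  is_derive (energy alpha U A) r (RInt (fun th => hdens_source K alpha nu U A th r) 0 1).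
Proof.
  intros Hr.
  replace (RInt (fun th => hdens_source K alpha nu U A th r) 0 1)
    with (RInt (fun th => flux_dth alpha U A th r + hdens_source K alpha nu U A th r) 0 1).
  - apply (is_derive_RInt_param_halfline (hdens alpha U A)
      (fun th s => flux_dth alpha U A th s + hdens_source K alpha nu U A th s) 0 1 R0 r Hr).
    + exact hdens_is_derive_R.
    + exact continuity_2d_hdens.
    + intros th s Hs. apply (continuity_2d_pt_plus (flux_dth alpha U A)).
      * now apply continuity_2d_flux_dth.
      * now apply continuity_2d_hdens_source.
  - rewrite (RInt_plus (V := R_CompleteNormedModule) (fun th => flux_dth alpha U A th r)).
    + rewrite RInt_flux_dth by exact Hr. exact (Rplus_0_l _).
    + apply ex_RInt_continuity_2d_pt. intros th _. now apply continuity_2d_flux_dth.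
    + now apply ex_RInt_hdens_source.
Qed.

Lemma hdens_cross_le th r : R0 < r ->
  2 * Rabs (pR U th r * pth U th r + exp (4 * U th r) / (4 * r ^ 2) * pR A th r * pth A th r)
  <= hdens alpha U A th r.
Proof.
  intros Hr. apply abs_cross_le.
  - apply sqrt_lt_R0, alpha_pos, Hr.
  - apply Rlt_le. positivity.
Qed.

Lemma hdens_nonneg th r : R0 < r -> 0 <= hdens alpha U A th r.
Proof.
  intros Hr. eapply Rle_trans; [|exact (hdens_cross_le th r Hr)].
  apply Rmult_le_pos; [lra | apply Rabs_pos].
Qed.

Lemma abs_beta_dth_le th r : R0 < r ->
  Rabs (pth (beta nu alpha) th r) <= r * hdens alpha U A th r.
Proof.
  intros Hr. rewrite beta_dth by exact Hr.
  rewrite Rabs_mult, (Rabs_pos_eq (2 * r)) by lra.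
  pose proof (hdens_cross_le th r Hr). nra.
Qed.

Lemma energy_nonneg r : R0 < r -> 0 <= energy alpha U A r.
Proof.
  intros Hr. apply RInt_ge_0; [lra | now apply ex_RInt_hdens |].
  intros th _. now apply hdens_nonneg.
Qed.

Lemma continuity_2d_beta th r : R0 < r -> continuity_2d_pt (beta nu alpha) th r.
Proof. intros Hr. unfold beta. continuity_2d. Qed.

Lemma continuity_2d_beta_dth th r : R0 < r -> continuity_2d_pt (pth (beta nu alpha)) th r.
Proof.
  intros Hr.
  apply (continuity_2d_pt_ext_loc (fun u v => 2 * v * (pR U u v * pth U u v
    + exp (4 * U u v) / (4 * v ^ 2) * pR A u v * pth A u v))).
  - apply (locally_2d_halfline R0); [exact Hr|]. intros u v Hv. symmetry. now apply beta_dth.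
  - unfold Rdiv. continuity_2d.
Qed.

Lemma beta_is_derive_theta th r : R0 < r ->
  is_derive (fun t => beta nu alpha t r) th (pth (beta nu alpha) th r).
Proof.
  intros Hr. apply Derive_correct. assert (Ha := alpha_pos th r Hr).
  unfold beta. auto_derive.
  repeat split; first [lra | apply (smooth_on_ex_derive_theta R0); [smooth | exact Hr]].
Qed.

Lemma beta_oscillation th r : R0 < r -> 0 <= th <= 1 ->
  Rabs (beta nu alpha th r - beta nu alpha 0 r) <= r * energy alpha U A r.
Proof.
  intros Hr Hth.
  apply Rle_trans with (RInt (fun t => r * hdens alpha U A t r) 0 th).
  - apply (is_derive_abs_sub_le_RInt (fun t => beta nu alpha t r)
      (fun t => pth (beta nu alpha) t r)); [lra | | | |].
    + intros t _. now apply beta_is_derive_theta.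
    + intros t _. now apply continuity_2d_pt_fst, continuity_2d_beta_dth.
    + now apply (ex_RInt_scal (V := R_CompleteNormedModule)), ex_RInt_hdens.
    + intros t _. now apply abs_beta_dth_le.
  - rewrite RInt_scal_R by now apply ex_RInt_hdens. apply Rmult_le_compat_l; [lra|].
    apply RInt_nonneg_le_extend; [lra | now apply ex_RInt_hdens | now apply ex_RInt_hdens |].
    intros t _. now apply hdens_nonneg.
Qed.

Lemma hdens_source_bounds th r m M : R0 < r -> m <= exp (2 * beta nu alpha th r) <= M ->
  - (2 / r + K ^ 2 * M / (2 * r ^ 3)) * hdens alpha U A th r
  <= hdens_source K alpha nu U A th r
  <= - (K ^ 2 * m / (2 * r ^ 3)) * hdens alpha U A th r.
Proof.
  intros Hr [Hm HM].
  assert (Hh := hdens_nonneg th r Hr).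
  assert (Hsa : 0 < sqrt (alpha th r)) by (apply sqrt_lt_R0, alpha_pos, Hr).
  assert (He : 0 < exp (4 * U th r) / (4 * r ^ 2)) by positivity.
  assert (Hk : 0 <= K ^ 2 / (2 * r ^ 3)) by (apply Rdiv_le_0_compat; [nra | positivity]).
  assert (H2r : 0 < 2 / r) by positivity.
  unfold hdens_source.
  set (X := pR U th r ^ 2 / sqrt (alpha th r)
            + exp (4 * U th r) / (4 * r ^ 2) * sqrt (alpha th r) * pth A th r ^ 2).
  assert (HX : 0 <= X <= hdens alpha U A th r).
  { unfold X, hdens.
    assert (0 <= pR U th r ^ 2 / sqrt (alpha th r)) by (apply Rdiv_le_0_compat; nra).
    assert (0 <= pR A th r ^ 2 / sqrt (alpha th r)) by (apply Rdiv_le_0_compat; nra).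
    assert (0 <= sqrt (alpha th r) * pth U th r ^ 2) by nra.
    assert (0 <= sqrt (alpha th r) * pth A th r ^ 2) by nra.
    split; nra. }
  replace (K ^ 2 * M / (2 * r ^ 3)) with (K ^ 2 / (2 * r ^ 3) * M) by (field; lra).
  replace (K ^ 2 * m / (2 * r ^ 3)) with (K ^ 2 / (2 * r ^ 3) * m) by (field; lra).
  replace (exp (2 * beta nu alpha th r) * K ^ 2 / (2 * r ^ 3))
    with (K ^ 2 / (2 * r ^ 3) * exp (2 * beta nu alpha th r)) by (field; lra).
  set (k := K ^ 2 / (2 * r ^ 3)) in *. set (h := hdens alpha U A th r) in *.
  assert (k * m * h <= k * exp (2 * beta nu alpha th r) * h <= k * M * h).
  { split; apply Rmult_le_compat_r, Rmult_le_compat_l; auto. }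
  split; nra.
Qed.

Lemma exp_double_beta_bounds th r : R0 < r -> 0 <= th <= 1 ->
  exp (2 * (beta nu alpha 0 r - r * energy alpha U A r)) <= exp (2 * beta nu alpha th r)
  <= exp (2 * (beta nu alpha 0 r + r * energy alpha U A r)).
Proof.
  intros Hr Hth. pose proof (proj1 (Rabs_le_between' _ _ _) (beta_oscillation th r Hr Hth)).
  split; apply exp_le; lra.
Qed.

Lemma energy_derivative_upper r : R0 < r ->
  RInt (fun th => hdens_source K alpha nu U A th r) 0 1
  <= - (K ^ 2 * exp (2 * (beta nu alpha 0 r - r * energy alpha U A r)) / (2 * r ^ 3))
     * energy alpha U A r.
Proof.
  intros Hr. apply RInt_le_scal_r; [lra | | |].
  - now apply ex_RInt_hdens.
  - now apply ex_RInt_hdens_source.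
  - intros th Hth.
    exact (proj2 (hdens_source_bounds th r _ _ Hr (exp_double_beta_bounds th r Hr ltac:(lra)))).
Qed.

Lemma energy_derivative_lower r : R0 < r ->
  - (2 / r + K ^ 2 * exp (2 * (beta nu alpha 0 r + r * energy alpha U A r)) / (2 * r ^ 3))
    * energy alpha U A r
  <= RInt (fun th => hdens_source K alpha nu U A th r) 0 1.
Proof.
  intros Hr. apply RInt_le_scal; [lra | | |].
  - now apply ex_RInt_hdens.
  - now apply ex_RInt_hdens_source.
  - intros th Hth.
    exact (proj1 (hdens_source_bounds th r _ _ Hr (exp_double_beta_bounds th r Hr ltac:(lra)))).
Qed.

Lemma energy_derivative_nonpos r : R0 < r ->
  RInt (fun th => hdens_source K alpha nu U A th r) 0 1 <= 0.
Proof.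
  intros Hr. pose proof (energy_derivative_upper r Hr). pose proof (energy_nonneg r Hr).
  assert (0 <= K ^ 2 * exp (2 * (beta nu alpha 0 r - r * energy alpha U A r)) / (2 * r ^ 3)).
  { apply Rdiv_le_0_compat; [apply Rmult_le_pos; [nra | apply Rlt_le, exp_pos] | positivity]. }
  nra.
Qed.

Lemma energy_nonincreasing r1 r2 : R0 < r1 -> r1 <= r2 ->
  energy alpha U A r2 <= energy alpha U A r1.
Proof.
  intros Hr1 H12.
  enough (- energy alpha U A r1 <= - energy alpha U A r2) by lra.
  apply (is_derive_nonneg_le (fun s => - energy alpha U A s)
           (fun s => - RInt (fun th => hdens_source K alpha nu U A th s) 0 1)); [exact H12 | |].
  - intros x Hx. apply (is_derive_opp (energy alpha U A)), energy_is_derive. lra.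
  - intros x Hx. pose proof (energy_derivative_nonpos x ltac:(lra)). lra.
Qed.

Lemma energy_zero_propagates r1 r : R0 < r1 -> R0 < r ->
  energy alpha U A r1 = 0 -> energy alpha U A r = 0.
Proof.
  intros Hr1 Hr HE1.
  pose proof (energy_nonneg r Hr) as HEr.
  destruct (Rle_or_lt r1 r) as [Hle | Hlt].
  { pose proof (energy_nonincreasing r1 r Hr1 Hle). lra. }
  destruct (continuity_ab_maj (fun s => beta nu alpha 0 s) r r1) as [Mx [HMx _]]; [lra | |].
  { intros c Hc. apply continuity_pt_filterlim, (continuity_2d_pt_snd (beta nu alpha)).
    apply continuity_2d_beta. lra. }
  (* C bounds the coefficient in [energy_derivative_lower] uniformly on [r, r1]. *)
  set (C := 2 / r
            + K ^ 2 * exp (2 * (beta nu alpha 0 Mx + r1 * energy alpha U A r)) / (2 * r ^ 3)).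
  assert (Hgron : energy alpha U A r <= energy alpha U A r1 * exp (C * (r1 - r))).
  { apply (is_derive_gronwall _ (fun s => RInt (fun th => hdens_source K alpha nu U A th s) 0 1));
      [lra | intros x Hx; apply energy_is_derive; lra |].
    intros x Hx. assert (Hx0 : R0 < x) by lra.
    pose proof (energy_derivative_lower x Hx0).
    pose proof (energy_nonneg x Hx0).
    pose proof (energy_nonincreasing r x Hr (proj1 Hx)).
    assert (Hcoef : 2 / x + K ^ 2 * exp (2 * (beta nu alpha 0 x + x * energy alpha U A x))
                            / (2 * x ^ 3) <= C).
    { unfold C. apply Rplus_le_compat; apply Rdiv_le_compat_pos.
      - lra.
      - lra.
      - split; [apply Rmult_le_pos; [nra | apply Rlt_le, exp_pos]|].
        apply Rmult_le_compat_l; [nra|]. apply exp_le.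
        assert (beta nu alpha 0 x <= beta nu alpha 0 Mx) by (apply HMx; lra).
        assert (x * energy alpha U A x <= r1 * energy alpha U A r) by (apply Rmult_le_compat; lra).
        lra.
      - split; [positivity|]. apply Rmult_le_compat_l; [lra|]. apply pow_incr. lra. }
    nra. }
  rewrite HE1, Rmult_0_l in Hgron. lra.
Qed.

Lemma energy_pos r0 r : R0 < r0 -> energy alpha U A r0 <> 0 -> R0 < r -> 0 < energy alpha U A r.
Proof.
  intros Hr0 HE Hr. destruct (energy_nonneg r Hr) as [| Hz]; [assumption|].
  exfalso. apply HE. apply (energy_zero_propagates r); auto.
Qed.

Lemma energy_decreasing r0 r1 r2 : K <> 0 -> R0 < r0 -> energy alpha U A r0 <> 0 ->
  R0 < r1 -> r1 < r2 -> energy alpha U A r2 < energy alpha U A r1.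
Proof.
  intros HK Hr0 HE Hr1 H12.
  apply (is_derive_neg_lt _ (fun s => RInt (fun th => hdens_source K alpha nu U A th s) 0 1));
    [exact H12 | intros x Hx; apply energy_is_derive; lra |].
  intros x Hx. assert (Hx0 : R0 < x) by lra.
  pose proof (energy_derivative_upper x Hx0).
  pose proof (energy_pos r0 x Hr0 HE Hx0).
  assert (0 < K ^ 2 * exp (2 * (beta nu alpha 0 x - x * energy alpha U A x)) / (2 * x ^ 3)).
  { apply Rdiv_lt_0_compat; [|positivity].
    apply Rmult_lt_0_compat; [apply pow2_gt_0, HK | apply exp_pos]. }
  nra.
Qed.

End Vacuum.

Theorem lemma1 (R0 K Ri : R) (alpha nu U A G H : R -> R -> R) :
  0 <= R0 -> 0 <= K ->
  T2_vacuum R0 K alpha nu U A G H ->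
  R0 < Ri ->
  (energy alpha U A Ri = 0 ->
     forall r, R0 < r -> energy alpha U A r = 0) /\
  (energy alpha U A Ri <> 0 ->
     forall r1 r2, R0 < r1 -> r1 <= r2 ->
       energy alpha U A r2 <= energy alpha U A r1) /\
  (energy alpha U A Ri <> 0 -> K <> 0 ->
     forall r1 r2, R0 < r1 -> r1 < r2 ->
       energy alpha U A r2 < energy alpha U A r1).
Proof.
  intros HR0 _ Hvac HRi. split; [|split].
  - intros HE r Hr. exact (energy_zero_propagates _ _ _ _ _ _ _ _ HR0 Hvac Ri r HRi Hr HE).
  - intros _ r1 r2. exact (energy_nonincreasing _ _ _ _ _ _ _ _ HR0 Hvac r1 r2).
  - intros HE HK r1 r2. exact (energy_decreasing _ _ _ _ _ _ _ _ HR0 Hvac Ri r1 r2 HK HRi HE).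
Qed.
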